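(* Let $G=(V,E)$ be a graph on $|V|=n$ vertices with minimum degree $\delta(G)>0$ and $|L(G;1/20)|\leq n/14$. Then $f_o(G)\geq n/61$.
   Context: For a graph $G=(V,E)$ and $\beta>0$, $L(G;\beta)$ is the set of vertices $v\in V$ for which there exists $u\in V$ with $uv\in E$ and $|N(u)\setminus N(v)|\geq \beta\,|N(u)\cup N(v)|$, where $N(x)$ is the neighborhood of $x$ in $G$. For a graph $G$, $f_o(G)$ denotes the maximum of $|V_0|$ over all $V_0\subseteq V(G)$ such that the induced subgraph $G[V_0]$ has all degrees odd. *)

From mathcomp Require Import all_boot all_order all_algebra.
Set Implicit Arguments. Unset Strict Implicit. Unset Printing Implicit Defensive.
Import Order.TTheory GRing.Theory Num.Theory.

Definition simple_graph (T : finType) (e : rel T) : Prop :=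
  symmetric e /\ irreflexive e.

Definition nbhd (T : finType) (e : rel T) (x : T) : {set T} := [set y | e x y].

Definition min_deg_pos (T : finType) (e : rel T) : Prop :=
  forall v : T, 0 < #|nbhd e v|.

Definition Lset (T : finType) (e : rel T) (beta : rat) : {set T} :=
  [set v | [exists u, e u v &&
     (beta * (#|nbhd e u :|: nbhd e v|)%:R <= (#|nbhd e u :\: nbhd e v|)%:R)%R]].

Definition odd_induced (T : finType) (e : rel T) (S : {set T}) : bool :=
  [forall v in S, odd #|nbhd e v :&: S|].

Definition f_o (T : finType) (e : rel T) : nat :=
  \max_(S : {set T} | odd_induced e S) #|S|.

From mathcomp Require Import all_boot all_order all_algebra.
From mathcomp Require Import zify lra.
Import Order.TTheory GRing.Theory Num.Theory.
Set Implicit Arguments. Unset Strict Implicit. Unset Printing Implicit Defensive.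

(* If v lies outside L = L(G; 1/20), then |N(u) \ N(v)| < |N(v)|/19 for every
   neighbour u of v, so neighbourhoods barely change along short paths that
   avoid L. By Gallai's theorem applied to the complement of G[A], every
   A within N(v) contains a set of size at least |A|/2 which, alone or together
   with v, induces a subgraph with all degrees odd. Call a vertex outside L good
   if at most half of its neighbours lie in L. Greedily take a good v, such an
   odd set inside N(v) \ L, and discard the good vertices w with
   5 |N(v) \ N(w)| < |N(v)|: the odd sets chosen this way are pairwise
   non-adjacent, and each step discards at most 5/4 |N(v) \ L| vertices while
   keeping at least |N(v) \ L|/2, so f_o(G) >= 2/5 #good. The remaining vertices
   outside L, which have more neighbours in L than outside, number at most 3|L|
   by a fractional double count, hence f_o(G) >= 2/5 (n - 4n/14) >= n/61. *)

Lemma card_sep (T : finType) (C : {set T}) (p : pred T) :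
  #|[set y in C | p y]| = \sum_(y in C) p y.
Proof. by rewrite -sum1dep_card big_mkcondr; apply: eq_bigr => y _; case: (p y). Qed.

Lemma odd_card_xor (T : finType) (S : {set T}) (p q : pred T) :
  odd #|[set y in S | p y (+) q y]|
  = odd #|[set y in S | p y]| (+) odd #|[set y in S | q y]|.
Proof.
set P := [set y in S | p y]; set Q := [set y in S | q y].
have -> : [set y in S | p y (+) q y] = (P :|: Q) :\: (P :&: Q).
  by apply/setP => y; rewrite !inE; case: (y \in S); case: (p y); case: (q y).
rewrite -oddD -cardsUI -(cardsID (P :&: Q) (P :|: Q)).
rewrite (setIidPr (subset_trans (subsetIl P Q) (subsetUl P Q))).
by rewrite addnAC addnn oddD odd_double.
Qed.

Section InducedParity.
Variable T : finType.
Implicit Types (r : rel T) (A M S W : {set T}).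

Definition even_induced r S : bool := [forall v in S, ~~ odd #|nbhd r v :&: S|].

Definition toggle_clique r M : rel T :=
  fun x y => r x y (+) [&& x \in M, y \in M & x != y].

Lemma toggle_clique_sym r M : symmetric r -> symmetric (toggle_clique r M).
Proof. by move=> rsym x y; rewrite /toggle_clique rsym eq_sym andbCA. Qed.

Lemma toggle_clique_irr r M : irreflexive r -> irreflexive (toggle_clique r M).
Proof. by move=> rirr x; rewrite /toggle_clique rirr eqxx !andbF. Qed.

Lemma odd_deg_toggle_clique r M S x : x \in S ->
  odd #|nbhd (toggle_clique r M) x :&: S|
  = odd #|nbhd r x :&: S| (+) (x \in M) && ~~ odd #|M :&: S|.
Proof.
move=> xS.
have -> : nbhd (toggle_clique r M) x :&: S
          = [set y in S | r x y (+) [&& x \in M, y \in M & x != y]].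
  by apply/setP => y; rewrite !inE andbC.
rewrite odd_card_xor.
have -> : [set y in S | r x y] = nbhd r x :&: S.
  by apply/setP => y; rewrite !inE andbC.
congr (_ (+) _).
case: (boolP (x \in M)) => xM /=; last by rewrite eq_card0 // => y; rewrite !inE andbF.
have -> : [set y in S | [&& true, y \in M & x != y]] = (M :&: S) :\ x.
  by apply/setP => y; rewrite !inE eq_sym; case: (y \in S); case: (y \in M); case: (y != x).
by rewrite [in RHS](cardsD1 x) !inE xM xS /= negbK.
Qed.

Lemma even_induced_untoggle r M S :
  even_induced (toggle_clique r M) S -> odd #|M :&: S| -> even_induced r S.
Proof.
move=> /forallP evS oddMS; apply/forall_inP => x xS.
by have := evS x; rewrite xS odd_deg_toggle_clique // oddMS andbF addbF.
Qed.

Lemma card_nbhdI_setU1 r v S y : v \notin S ->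
  #|nbhd r y :&: (v |: S)| = r y v + #|nbhd r y :&: S|.
Proof.
move=> vS; rewrite (cardsD1 v) !inE eqxx andbT.
suff -> : nbhd r y :&: (v |: S) :\ v = nbhd r y :&: S by [].
by apply/setP => z; rewrite !inE; case: (z =P v) => [-> | _]; rewrite ?(negbTE vS) ?andbF.
Qed.

Lemma even_induced_untoggle_setU1 r M S v : symmetric r -> irreflexive r ->
  v \notin S -> {in S, forall y, r v y = (y \in M)} ->
  even_induced (toggle_clique r M) S -> ~~ odd #|M :&: S| ->
  even_induced r (v |: S).
Proof.
move=> rsym rirr vS vM /forallP evS evMS; apply/forall_inP => x.
rewrite card_nbhdI_setU1 // in_setU1 => /predU1P [-> | xS].
  rewrite rirr add0n; suff -> : nbhd r v :&: S = M :&: S by [].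
  by apply/setP => y; rewrite !inE; case: (boolP (y \in S)) => [/vM -> | _]; rewrite ?andbF.
have := evS x; rewrite xS odd_deg_toggle_clique // evMS andbT rsym (vM x xS) oddD.
by case: (x \in M); case: (odd _).
Qed.

(* Induction on #|A|: at a vertex v of odd degree in A, toggle the edges inside
   M = N(v) :&: A and split A :\ v; as #|M| is odd, v can join the part that
   meets M evenly. *)
Theorem gallai_even_partition r (A : {set T}) : symmetric r -> irreflexive r ->
  exists2 P : {set T}, P \subset A & even_induced r P && even_induced r (A :\: P).
Proof.
have [n] := ubnP #|A|; elim: n => // n IH in r A *; rewrite ltnS => cardA rsym rirr.
have [evA | /forall_inPn [v vA]] := boolP (even_induced r A).
  by exists A; rewrite // evA setDv; apply/forall_inP => x; rewrite inE.
rewrite negbK => oddM; set M := nbhd r v :&: A in oddM; set A' := A :\ v.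
have MA' : M \subset A'.
  apply/subsetP => y; rewrite !inE => /andP [rvy ->]; rewrite andbT.
  by apply: contraTneq rvy => ->; rewrite rirr.
have cardA' : #|A'| < n by move: cardA; rewrite (cardsD1 v A) vA.
have [P' P'A' /andP [evP' evQ']] :=
  IH (toggle_clique r M) A' cardA' (toggle_clique_sym M rsym) (toggle_clique_irr M rirr).
set Q' := A' :\: P' in evQ'.
have splitM : #|M :&: P'| + #|M :&: Q'| = #|M|.
  by rewrite -(cardsID P' M) setIDA (setIidPl MA').
have extend (X Y : {set T}) : Y \subset A' -> #|M :&: X| + #|M :&: Y| = #|M| ->
    even_induced (toggle_clique r M) X -> even_induced (toggle_clique r M) Y ->
    odd #|M :&: X| -> even_induced r X && even_induced r (v |: Y).
  move=> YA' splitXY evX evY oddX; rewrite (even_induced_untoggle evX) //=.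
  apply: even_induced_untoggle_setU1 evY _ => //.
  - by apply/negP => /(subsetP YA'); rewrite !inE eqxx.
  - by move=> y /(subsetP YA'); rewrite !inE => /andP [_ yA]; rewrite yA andbT.
  - by move: oddM; rewrite -splitXY oddD oddX; case: (odd _).
have [oddMP' | evMP'] := boolP (odd #|M :&: P'|).
  exists P'; first exact: subset_trans P'A' (subsetDl A [set v]).
  suff -> : A :\: P' = v |: Q' by exact: extend (subsetDl _ _) splitM evP' evQ' oddMP'.
  apply/setP => x; rewrite !inE; case: (x =P v) => [-> | //].
  by rewrite vA andbT; apply/negP => /(subsetP P'A'); rewrite !inE eqxx.
exists (v |: P').
  apply/subsetP => x; rewrite !inE => /predU1P [-> // | /(subsetP P'A')].
  by rewrite !inE => /andP [].
suff -> : A :\: (v |: P') = Q'.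
  rewrite andbC; apply: extend P'A' _ evQ' evP' _; first by rewrite addnC.
  by move: oddM; rewrite -splitM oddD (negbTE evMP').
by apply/setP => x; rewrite !inE negb_or -andbA andbCA.
Qed.

Definition compl_rel r : rel T := fun x y => (x != y) && ~~ r x y.

Lemma compl_rel_sym r : symmetric r -> symmetric (compl_rel r).
Proof. by move=> rsym x y; rewrite /compl_rel eq_sym rsym. Qed.

Lemma compl_rel_irr r : irreflexive (compl_rel r).
Proof. by move=> x; rewrite /compl_rel eqxx. Qed.

Lemma odd_deg_compl_even r S x : irreflexive r ->
  even_induced (compl_rel r) S -> x \in S -> odd #|nbhd r x :&: S| = ~~ odd #|S|.
Proof.
move=> rirr /forall_inP evS xS; have := cardsID (nbhd r x) (S :\ x).
have -> : (S :\ x) :&: nbhd r x = nbhd r x :&: S.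
  by apply/setP => y; rewrite !inE; case: (y =P x) => [-> | _] /=; rewrite ?rirr ?andbF // andbC.
have -> : (S :\ x) :\: nbhd r x = nbhd (compl_rel r) x :&: S.
  by apply/setP => y; rewrite !inE /compl_rel eq_sym andbCA andbA.
move/(congr1 odd); rewrite oddD (negbTE (evS x xS)) addbF => ->.
by rewrite [in RHS](cardsD1 x) xS negbK.
Qed.

Lemma odd_induced_setU1 r v S : symmetric r -> irreflexive r ->
  S \subset nbhd r v -> even_induced r S -> odd #|S| -> odd_induced r (v |: S).
Proof.
move=> rsym rirr Sv /forall_inP evS oddS.
have vS : v \notin S by apply/negP => /(subsetP Sv); rewrite inE rirr.
apply/forall_inP => x; rewrite card_nbhdI_setU1 // in_setU1 => /predU1P [-> | xS].
  by rewrite rirr add0n (setIidPr Sv).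
by move: (subsetP Sv x xS); rewrite inE rsym => ->; rewrite add1n /= evS.
Qed.

Lemma odd_induced_in_nbhd r v A : symmetric r -> irreflexive r -> A \subset nbhd r v ->
  exists W : {set T}, [/\ W \subset v |: A, odd_induced r W & #|A| <= 2 * #|W|].
Proof.
move=> rsym rirr Av.
have [P PA /andP [evP evQ]] := gallai_even_partition A (compl_rel_sym rsym) (@compl_rel_irr r).
have [S [SA evS bigS]] :
    exists S, [/\ S \subset A, even_induced (compl_rel r) S & #|A| <= 2 * #|S|].
  have := cardsID P A; rewrite (setIidPr PA).
  case: (leqP #|A| (2 * #|P|)) => ? ?; first by exists P.
  by exists (A :\: P); split; rewrite ?subsetDl //; lia.
have [oddS | evenS] := boolP (odd #|S|).
  exists (v |: S); split; first exact: setUS.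
    apply: odd_induced_setU1 => //; first exact: subset_trans SA Av.
    by apply/forall_inP => x xS; rewrite odd_deg_compl_even ?negbK.
  by rewrite cardsU1; lia.
exists S; split => //; first exact: subset_trans SA (subsetUr _ _).
by apply/forall_inP => x xS; rewrite odd_deg_compl_even.
Qed.

Lemma odd_induced_setU r W1 W2 : symmetric r ->
  odd_induced r W1 -> odd_induced r W2 -> {in W1 & W2, forall a b, ~~ r a b} ->
  odd_induced r (W1 :|: W2).
Proof.
move=> rsym oW1 oW2 sep; apply/forall_inP => x.
wlog xW1 : W1 W2 oW1 oW2 sep / x \in W1.
  move=> gen; rewrite in_setU => /orP [xW | xW]; first by apply: gen; rewrite ?inE ?xW.
  rewrite setUC; apply: gen; rewrite ?inE ?xW //.
  by move=> a b aW2 bW1; rewrite rsym sep.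
move=> _; suff -> : nbhd r x :&: (W1 :|: W2) = nbhd r x :&: W1 by move/forall_inP: oW1; apply.
apply/setP => y; rewrite !inE; case yW2: (y \in W2); rewrite ?orbF //.
by rewrite (negbTE (sep x y xW1 yW2)).
Qed.

End InducedParity.

Section FractionalDoubleCounting.
Local Open Scope ring_scope.

(* Every b in B spreads a unit weight evenly over its neighbours in C, and every
   u in C receives at most k. *)
Lemma fractional_double_count (T : finType) (r : rel T) (B C : {set T}) (k : nat) :
  {in B, forall b, exists2 u, u \in C & r b u} ->
  (forall b u, b \in B -> u \in C -> r b u ->
     #|[set w in B | r w u]| <= k * #|[set y in C | r b y]|)%N ->
  (#|B| <= k * #|C|)%N.
Proof.
move=> hasC codeg_le.
pose deg b : rat := #|[set y in C | r b y]|%:R.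
pose codeg u : rat := #|[set w in B | r w u]|%:R.
have deg_gt0 b : b \in B -> 0 < deg b.
  by case/hasC => u uC rbu; rewrite ltr0n card_gt0; apply/set0Pn; exists u; rewrite inE uC.
rewrite -(ler_nat rat) -sum1_card natr_sum natrM -[#|C|]sum1_card natr_sum mulr_sumr.
have -> : \sum_(b in B) 1%:R = \sum_(b in B) \sum_(u in C) (r b u)%:R / deg b :> rat.
  apply: eq_bigr => b bB; rewrite -mulr_suml -natr_sum -card_sep mulfV //.
  by rewrite gt_eqF // deg_gt0.
rewrite exchange_big /=; apply: ler_sum => u uC; rewrite mulr1.
apply: le_trans (_ : \sum_(b in B) (r b u)%:R * (k%:R / codeg u) <= _).
  apply: ler_sum => b bB; have [rbu | _] := boolP (r b u); last by rewrite !mul0r.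
  have codeg_gt0 : 0 < codeg u.
    by rewrite ltr0n card_gt0; apply/set0Pn; exists b; rewrite inE bB.
  rewrite !mul1r ler_pdivlMr // mulrC ler_pdivrMr ?deg_gt0 //.
  by rewrite -natrM ler_nat codeg_le.
rewrite -mulr_suml -natr_sum -card_sep -/(codeg u).
have [-> | codeg_neq0] := eqVneq (codeg u) 0; first by rewrite mul0r ler0n.
by rewrite mulrCA mulfV // mulr1.
Qed.

End FractionalDoubleCounting.

Section ParityClusters.
Variables (T : finType) (e : rel T).
Hypotheses (esym : symmetric e) (eirr : irreflexive e) (emin : min_deg_pos e).

Local Notation N := (nbhd e).
Local Notation L := (Lset e (1 / 20)%R).

Lemma card_nbhdD_notinL u v : v \notin L -> e u v -> 19 * #|N u :\: N v| < #|N v|.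
Proof.
move=> vL euv.
have : ~~ ((1 / 20 : rat) * #|N u :|: N v|%:R <= #|N u :\: N v|%:R)%R.
  by apply: contra vL => small; rewrite inE; apply/existsP; exists u; rewrite euv.
rewrite -ltNge -(cardsID (N v) (N u :|: N v)) setIC setKU setDUl setDv setU0 natrD.
by rewrite -(ltr_nat rat) natrM; lra.
Qed.

Lemma card_nbhd_notinL v : v \notin L -> 20 <= #|N v|.
Proof.
move=> vL; have /card_gt0P [u] := emin v; rewrite inE => evu.
have vNuD : v \in N u :\: N v by rewrite !inE eirr esym evu.
have := card_nbhdD_notinL vL (etrans (esym u v) evu).
have /card_gt0P : exists x, x \in N u :\: N v by exists v.
lia.
Qed.

Lemma card_nbhdD_step x y : x \notin L -> y \notin L -> (x == y) || e x y ->
  19 * #|N x :\: N y| <= #|N y| /\ 19 * #|N y| <= 20 * #|N x|.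
Proof.
move=> xL yL /predU1P [<- | exy]; first by rewrite setDv cards0; lia.
have := card_nbhdD_notinL yL exy; have := card_nbhdD_notinL xL (etrans (esym y x) exy).
have := cardsID (N x) (N y); have := subset_leq_card (subsetIr (N y) (N x)).
lia.
Qed.

Lemma card_setD_trans (A B C : {set T}) : #|A :\: C| <= #|A :\: B| + #|B :\: C|.
Proof.
apply: leq_trans (leq_card_setU _ _); apply: subset_leq_card; apply/subsetP => z.
by rewrite !inE; case: (z \in A); case: (z \in B); case: (z \in C).
Qed.

Definition close v w := 5 * #|N v :\: N w| < #|N v|.

Lemma close_path3 x0 x1 x2 x3 :
  x0 \notin L -> x1 \notin L -> x2 \notin L -> x3 \notin L ->
  (x0 == x1) || e x0 x1 -> (x1 == x2) || e x1 x2 -> (x2 == x3) || e x2 x3 ->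
  close x0 x3.
Proof.
move=> x0L x1L x2L x3L s01 s12 s23.
have [? ?] := card_nbhdD_step x0L x1L s01.
have [? ?] := card_nbhdD_step x1L x2L s12.
have [? ?] := card_nbhdD_step x2L x3L s23.
have := card_setD_trans (N x0) (N x1) (N x3); have := card_setD_trans (N x1) (N x2) (N x3).
have := card_nbhd_notinL x0L; rewrite /close; lia.
Qed.

Lemma sum_card_nbhdI (A B : {set T}) :
  \sum_(w in B) #|N w :&: A| = \sum_(u in A) #|N u :&: B|.
Proof.
have cardE x (S : {set T}) : #|N x :&: S| = \sum_(y in S) e x y.
  by rewrite -card_sep; apply: eq_card => y; rewrite !inE andbC.
under eq_bigr do rewrite cardE; under [RHS]eq_bigr do rewrite cardE.
by rewrite exchange_big; apply: eq_bigr => u _; apply: eq_bigr => w _; rewrite esym.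
Qed.

Definition near v := [set w | (w \notin L) && close v w].
Definition near_nonadj v := [set w | [&& w \notin N v, w != v & close v w]].

(* Count the pairs (u, w) with u in N(v) :&: N(w): each such w shares more than
   4/5 of N(v), while each u in N(v) has fewer than |N(v)|/19 neighbours
   outside N(v). *)
Lemma card_near_nonadj v : v \notin L -> 76 * #|near_nonadj v| <= 5 * #|N v|.
Proof.
move=> vL; set X := near_nonadj v; have d_ge20 := card_nbhd_notinL vL.
have lowX : #|X| * (4 * #|N v| + 1) <= 5 * \sum_(w in X) #|N w :&: N v|.
  rewrite -sum_nat_const big_distrr /=; apply: leq_sum => w.
  rewrite inE setIC => /and3P [_ _ close_vw].
  by have := cardsID (N w) (N v); rewrite /close in close_vw; lia.
have upX : \sum_(u in N v) #|N u :&: X| <= \sum_(u in N v) #|N u :\: N v|.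
  apply: leq_sum => u _; apply: subset_leq_card; apply/subsetP => w.
  by rewrite !inE => /andP [-> /and3P [wNv _ _]]; rewrite andbT.
have upD : \sum_(u in N v) (19 * #|N u :\: N v| + 1) <= \sum_(u in N v) #|N v|.
  apply: leq_sum => u; rewrite inE => evu.
  by have := card_nbhdD_notinL vL (etrans (esym u v) evu); lia.
rewrite sum_card_nbhdI in lowX.
rewrite big_split /= -big_distrr !sum_nat_const /= in upD.
have : #|N v| * (76 * #|X|) <= #|N v| * (5 * #|N v|) by nia.
by rewrite leq_pmul2l //; lia.
Qed.

Definition star v := v |: (N v :\: L).

Lemma near_sub v : near v \subset star v :|: near_nonadj v.
Proof.
apply/subsetP => w; rewrite !inE => /andP [-> close_vw]; rewrite close_vw andbT /=.
by case: (w =P v) => //= _; case: (e v w).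
Qed.

Definition good := [set w | (w \notin L) && (#|N w :&: L| <= #|N w :\: L|)].
Definition bad := [set w | (w \notin L) && (#|N w :\: L| < #|N w :&: L|)].

Lemma card_near_good v : v \in good -> 4 * #|near v| <= 5 * #|N v :\: L|.
Proof.
rewrite inE => /andP [vL more_outside].
have := subset_leq_card (near_sub v); have := (leq_card_setU (star v) (near_nonadj v)).1.
have := card_near_nonadj vL; have := card_nbhd_notinL vL; have := cardsID L (N v).
have : #|star v| <= 1 + #|N v :\: L| by rewrite cardsU1 leq_add2r leq_b1.
lia.
Qed.

Lemma star_separated v c a b : v \notin L -> c \notin L -> c \notin near v ->
  a \in star v -> b \in star c -> ~~ ((a == b) || e a b).
Proof.
have mem_star x y : y \in star x -> x \notin L -> y \notin L /\ (x == y) || e x y.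
  by rewrite !inE => /predU1P [-> | /andP [-> ->]]; rewrite ?eqxx ?orbT.
move=> vL cL c_far /mem_star [// | aL va] /mem_star [// | bL cb].
apply: contra c_far => ab; rewrite inE cL; apply: close_path3 va ab _ => //.
by rewrite eq_sym esym.
Qed.

Lemma odd_induced_from_good (U : {set T}) : U \subset good ->
  exists W : {set T},
    [/\ odd_induced e W, 2 * #|U| <= 5 * #|W| & W \subset \bigcup_(c in U) star c].
Proof.
have [n] := ubnP #|U|; elim: n => // n IH in U *; rewrite ltnS => cardU Ugood.
have [-> | [v vU]] := set_0Vmem U.
  by exists set0; split; rewrite ?cards0 ?sub0set //; apply/forall_inP => x; rewrite inE.
have vgood := subsetP Ugood v vU.
have vL : v \notin L by move: vgood; rewrite inE => /andP [].
have v_near : v \in near v.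
  by rewrite inE vL /close setDv cards0; have := card_nbhd_notinL vL; lia.
have U'good : U :\: near v \subset good by apply: subset_trans (subsetDl _ _) Ugood.
have [|W' [oddW' bigW' W'U']] := IH (U :\: near v) _ U'good.
  apply: leq_trans cardU; apply: proper_card; apply/properP; split; first exact: subsetDl.
  by exists v; rewrite // inE v_near.
have [Wv [Wv_star oddWv bigWv]] := odd_induced_in_nbhd esym eirr (subsetDl (N v) L).
have sep : {in Wv & W', forall a b, ~~ ((a == b) || e a b)}.
  move=> a b aWv /(subsetP W'U') /bigcupP [c]; rewrite inE => /andP [c_far cU].
  have cL : c \notin L by move: (subsetP Ugood c cU); rewrite inE => /andP [].
  exact: star_separated vL cL c_far (subsetP Wv_star a aWv).
exists (Wv :|: W'); split.
- apply: odd_induced_setU => // a b aWv bW'.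
  by have := sep a b aWv bW'; rewrite negb_or => /andP [].
- have WvW' : Wv :&: W' = set0.
    apply/setP => x; rewrite !inE; apply/negP => /andP [xWv xW'].
    by have := sep x x xWv xW'; rewrite eqxx.
  have := cardsID (near v) U; have := subset_leq_card (subsetIr U (near v)).
  have := card_near_good vgood; rewrite cardsU WvW' cards0; lia.
apply/subsetP => w; rewrite inE => /orP [/(subsetP Wv_star) w_star | /(subsetP W'U')].
  by apply/bigcupP; exists v.
by case/bigcupP => c; rewrite inE => /andP [_ cU] wc; apply/bigcupP; exists c.
Qed.

Lemma card_bad : #|bad| <= 3 * #|L|.
Proof.
apply: (@fractional_double_count _ e) => [b | b u].
  rewrite inE => /andP [_ inside]; have /card_gt0P [u] : 0 < #|N b :&: L| by lia.
  by case/setIP; rewrite inE => ebu uL; exists u.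
rewrite inE => /andP [bL more_inside] uL ebu.
have -> : #|[set y in L | e b y]| = #|N b :&: L| by apply: eq_card => y; rewrite !inE andbC.
apply: leq_trans (_ : #|N u| <= _).
  by apply: subset_leq_card; apply/subsetP => w; rewrite !inE esym => /andP [].
have := card_nbhdD_notinL bL (etrans (esym u b) ebu); have := cardsID (N b) (N u).
have := subset_leq_card (subsetIr (N u) (N b)); have := cardsID L (N b).
lia.
Qed.

End ParityClusters.

Theorem lemma2p5 (T : finType) (e : rel T) :
  simple_graph e ->
  min_deg_pos e ->
  (14 * #|Lset e (1 / 20)%R| <= #|T|)%N ->
  (#|T| <= 61 * f_o e)%N.
Proof.
move=> [esym eirr] emin smallL.
have [W [oddW bigW _]] := odd_induced_from_good esym eirr emin (subxx (good e)).
have W_le_fo : #|W| <= f_o e by exact: leq_bigmax_cond.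
have := card_bad esym.
have : #|~: Lset e (1 / 20)%R| <= #|good e| + #|bad e|.
  apply: leq_trans (leq_card_setU _ _); apply: subset_leq_card; apply/subsetP => x.
  by rewrite !inE => xL; rewrite xL /= leqNgt orNb.
have := cardsC (Lset e (1 / 20)%R).
lia.
Qed.
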